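(* Consider an instance of the bipartite stable $b$-matching problem with bipartite graph $G=(U\cup W,E)$, preference lists $L$ and quota function $b$. Let $M_1$ be a $b$-matching with set of blocking pairs $B_1$, and let $(u,w)\in B_1$. Remove the blocking pair $(u,w)$ as follows: if $u$ is full in $M_1$, disconnect $u$ from a worst partner $w'$ of $u$; if $w$ is full in $M_1$, disconnect $w$ from a worst partner $u'$ of $w$; then add the edge $(u,w)$. Call the resulting $b$-matching $M_2$ and its set of blocking pairs $B_2$ (if nothing is disconnected from $u$, $w'$ is undefined; if nothing is disconnected from $w$, $u'$ is undefined). If $B_2\setminus B_1\neq\varnothing$, then at least one of $u'$, $w'$ exists, and every blocking pair in $B_2\setminus B_1$ involves $u'$ or $w'$.
   Context: An instance consists of an undirected bipartite graph $G=(V,E)$ with $V=U\cup W$ ($U,W$ disjoint), a quota function $b:V\to\mathbb{N}$, and for each agent $v\in V$ a preference list $L_v$ over the agents adjacent to $v$ (its candidates); $r_v(x)$ denotes the rank of $x$ in $v$'s list (smaller is better). A $b$-matching $M\subseteq E$ is a set of edges such that each $v$ lies in at most $b(v)$ edges of $M$; $M(v)$ is the set of partners of $v$; $v$ is full if $|M(v)|=b(v)$ and free otherwise; a worst partner of $v$ is an $x\in M(v)$ with $r_v(x)=\max\{r_v(y): y\in M(v)\}$. A pair $(u,w)$ is a blocking pair of $M$ if (i) $u\in L_w$, $w\in L_u$ and $(u,w)\notin M$; (ii) $u$ is free or strictly prefers $w$ to its worst partner in $M$; (iii) $w$ is free or strictly prefers $u$ to its worst partner in $M$. *)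

From mathcomp Require Import all_boot.
Set Implicit Arguments. Unset Strict Implicit. Unset Printing Implicit Defensive.

Section BMatching.
Variables (U W : finType).
Variable E : U -> W -> bool.
(* preference lists; rank = position in the list (smaller is better) *)
Variable Lu : U -> seq W.
Variable Lw : W -> seq U.
Variable bU : U -> nat.
Variable bW : W -> nat.

Definition rankU (u : U) (w : W) : nat := index w (Lu u).
Definition rankW (w : W) (u : U) : nat := index u (Lw w).

Definition wf_instance : Prop :=
  [/\ forall u, uniq (Lu u), forall w, uniq (Lw w),
      forall u w, (w \in Lu u) = E u w
    & forall u w, (u \in Lw w) = E u w].

Definition partnersU (M : {set U * W}) (u : U) : {set W} := [set w | (u, w) \in M].
Definition partnersW (M : {set U * W}) (w : W) : {set U} := [set u | (u, w) \in M].

Definition is_bmatching (M : {set U * W}) : Prop :=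
  [/\ forall p, p \in M -> E p.1 p.2,
      forall u, #|partnersU M u| <= bU u
    & forall w, #|partnersW M w| <= bW w].

Definition fullU M u := #|partnersU M u| == bU u.
Definition fullW M w := #|partnersW M w| == bW w.
Definition freeU M u := #|partnersU M u| < bU u.
Definition freeW M w := #|partnersW M w| < bW w.

Definition worstU M u (x : W) : bool :=
  (x \in partnersU M u) && [forall y in partnersU M u, rankU u y <= rankU u x].
Definition worstW M w (x : U) : bool :=
  (x \in partnersW M w) && [forall y in partnersW M w, rankW w y <= rankW w x].

Definition blocking (M : {set U * W}) (u : U) (w : W) : bool :=
  [&& (u \in Lw w), (w \in Lu u), ((u, w) \notin M),
      freeU M u || [exists x, worstU M u x && (rankU u w < rankU u x)]
    & freeW M w || [exists x, worstW M w x && (rankW w u < rankW w x)]].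

Definition blocking_set (M : {set U * W}) : {set U * W} :=
  [set p | blocking M p.1 p.2].

Definition remove_blocking (M : {set U * W}) (u : U) (w : W)
    (w' : option W) (u' : option U) : {set U * W} :=
  let RU := if w' is Some x then [set (u, x)] else set0 in
  let RW := if u' is Some y then [set (y, w)] else set0 in
  ((M :\: RU) :\: RW) :|: [set (u, w)].

End BMatching.

From mathcomp Require Import all_boot.
Set Implicit Arguments. Unset Strict Implicit. Unset Printing Implicit Defensive.

(* An agent accepts a candidate when it is free or prefers the candidate to a
   worst partner.  Take a pair (a, b) that blocks M2 with a <> u' and b <> w'.
   Then (a, b) was not removed, so it is not in M1 either.  The partner set of
   a in M2 is that of M1, unless a = u; in that case either u was free in M1,
   so it accepted everything, or its worst partner w' was replaced by the
   better agent w, and whatever u accepts afterwards it already accepted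
   before.  The same holds for b, so (a, b) already blocked M1. *)

Section Acceptance.
Variables (X : finType) (r : X -> nat) (q : nat).

Definition worst (P : {set X}) (x : X) : bool :=
  (x \in P) && [forall z in P, r z <= r x].

Definition accepts (P : {set X}) (y : X) : bool :=
  (#|P| < q) || [exists x, worst P x && (r y < r x)].

Lemma accepts_replace_worst (P : {set X}) (t x0 y : X) :
  t \notin P -> worst P x0 -> accepts P t ->
  accepts (t |: (P :\ x0)) y -> accepts P y.
Proof.
move=> tNP /andP[x0P /forallP x0_worst].
rewrite /accepts; case: ltnP => //= full /existsP[x /andP[/andP[xP _] tx]].
have tx0 : r t < r x0.
  by apply: leq_trans tx _; have := x0_worst x; rewrite xP.
(* Replacing x0 by t keeps the size, so the new set is full as well. *)
rewrite cardsU1 in_setD1 (negbTE tNP) andbF add1n.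
have -> : (#|P :\ x0|).+1 = #|P| by rewrite (cardsD1 x0 P) x0P.
rewrite ltnNge full /= => /existsP[x' /andP[/andP[x'P' _] yx']].
apply/existsP; exists x0; rewrite /worst x0P; apply/andP; split.
  exact/forallP.
apply: leq_trans yx' _.
move: x'P'; rewrite in_setU1 in_setD1 => /orP[/eqP ->|/andP[_ x'P]].
  exact: ltnW.
by have := x0_worst x'; rewrite x'P.
Qed.

End Acceptance.

Section RemoveBlocking.
Variables (U W : finType) (E : U -> W -> bool).
Variables (Lu : U -> seq W) (Lw : W -> seq U) (bU : U -> nat) (bW : W -> nat).
Variables (M : {set U * W}) (u : U) (w : W) (w' : option W) (u' : option U).

Hypothesis M_bmatching : is_bmatching E bU bW M.
Hypothesis uw_blocking : blocking Lu Lw bU bW M u w.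
Hypothesis w'_worst :
  if fullU bU M u then exists2 x, w' = Some x & worstU Lu M u x else w' = None.
Hypothesis u'_worst :
  if fullW bW M w then exists2 y, u' = Some y & worstW Lw M w y else u' = None.

Local Notation M' := (remove_blocking M u w w' u').

Lemma blockingE (N : {set U * W}) a b :
  blocking Lu Lw bU bW N a b =
  [&& a \in Lw b, b \in Lu a, (a, b) \notin N,
      accepts (rankU Lu a) (bU a) (partnersU N a) b
    & accepts (rankW Lw b) (bW b) (partnersW N b) a].
Proof. by []. Qed.

Lemma mem_partnersU (N : {set U * W}) a z : (z \in partnersU N a) = ((a, z) \in N).
Proof. by rewrite in_set. Qed.

Lemma mem_partnersW (N : {set U * W}) b z : (z \in partnersW N b) = ((z, b) \in N).
Proof. by rewrite in_set. Qed.

Lemma mem_remove_blocking a b :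
  ((a, b) \in M') =
  ((a == u) && (b == w)) ||
  [&& (a, b) \in M, ~~ ((a == u) && (w' == Some b))
    & ~~ ((u' == Some a) && (b == w))].
Proof.
case: w' => [x|]; case: u' => [y|];
  rewrite /remove_blocking !inE /= ?xpair_eqE ?(inj_eq (@Some_inj _))
    ?(eq_sym y) ?(eq_sym x);
by case: ((a, b) \in M); case: (a == u); case: (b == w);
   try case: (a == y); try case: (b == x).
Qed.

Lemma partnersU_remove_blocking_neq a :
  a != u -> u' != Some a -> partnersU M' a = partnersU M a.
Proof.
move=> /negbTE au /negbTE u'a; apply/setP => z.
by rewrite !mem_partnersU mem_remove_blocking au u'a /= andbT.
Qed.

Lemma partnersW_remove_blocking_neq b :
  b != w -> w' != Some b -> partnersW M' b = partnersW M b.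
Proof.
move=> /negbTE bw /negbTE w'b; apply/setP => z.
by rewrite !mem_partnersW mem_remove_blocking bw w'b /= !andbF andbT.
Qed.

Lemma partnersU_remove_blocking_Some x :
  w' = Some x -> partnersU M' u = w |: (partnersU M u :\ x).
Proof.
move=> w'x; apply/setP => z.
rewrite in_setU1 in_setD1 !mem_partnersU mem_remove_blocking w'x eqxx /=.
rewrite (inj_eq (@Some_inj _)).
by case: (eqVneq z w) => //= _; rewrite andbF andbT andbC (eq_sym x).
Qed.

Lemma partnersW_remove_blocking_Some y :
  u' = Some y -> partnersW M' w = u |: (partnersW M w :\ y).
Proof.
move=> u'y; apply/setP => z.
rewrite in_setU1 in_setD1 !mem_partnersW mem_remove_blocking u'y eqxx /=.
rewrite (inj_eq (@Some_inj _)) !andbT.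
by case: (eqVneq z u) => //= _; rewrite andbC (eq_sym y).
Qed.

Lemma acceptsU_remove_blocking a y :
  u' != Some a ->
  accepts (rankU Lu a) (bU a) (partnersU M' a) y ->
  accepts (rankU Lu a) (bU a) (partnersU M a) y.
Proof.
move=> u'a; have [->|au] := eqVneq a u; last first.
  by rewrite partnersU_remove_blocking_neq.
move: uw_blocking w'_worst; rewrite blockingE => /and5P[_ _ uwNM acc _].
rewrite /fullU; case: eqP => [_ [x w'x x_worst]|not_full _].
  rewrite (partnersU_remove_blocking_Some w'x).
  by apply: accepts_replace_worst; rewrite // inE.
case: M_bmatching => _ le_bU _.
by move=> _; rewrite /accepts ltn_neqAle le_bU andbT; move/eqP: not_full => ->.
Qed.

Lemma acceptsW_remove_blocking b y :
  w' != Some b ->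
  accepts (rankW Lw b) (bW b) (partnersW M' b) y ->
  accepts (rankW Lw b) (bW b) (partnersW M b) y.
Proof.
move=> w'b; have [->|bw] := eqVneq b w; last first.
  by rewrite partnersW_remove_blocking_neq.
move: uw_blocking u'_worst; rewrite blockingE => /and5P[_ _ uwNM _ acc].
rewrite /fullW; case: eqP => [_ [y' u'y y'_worst]|not_full _].
  rewrite (partnersW_remove_blocking_Some u'y).
  by apply: accepts_replace_worst; rewrite // inE.
case: M_bmatching => _ _ le_bW.
by move=> _; rewrite /accepts ltn_neqAle le_bW andbT; move/eqP: not_full => ->.
Qed.

Lemma blocking_remove_blocking a b :
  u' != Some a -> w' != Some b ->
  blocking Lu Lw bU bW M' a b -> blocking Lu Lw bU bW M a b.
Proof.
move=> u'a w'b; rewrite !blockingE => /and5P[aLb bLa abNM' accU accW].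
apply/and5P; split => //.
- apply: contra abNM' => abM.
  by rewrite mem_remove_blocking abM (negbTE u'a) (negbTE w'b) !andbF orbT.
- exact: acceptsU_remove_blocking.
- exact: acceptsW_remove_blocking.
Qed.

End RemoveBlocking.

Theorem proposition2 (U W : finType) (E : U -> W -> bool)
  (Lu : U -> seq W) (Lw : W -> seq U) (bU : U -> nat) (bW : W -> nat)
  (M1 : {set U * W}) (u : U) (w : W) (w' : option W) (u' : option U) :
  wf_instance E Lu Lw ->
  is_bmatching E bU bW M1 ->
  (u, w) \in blocking_set Lu Lw bU bW M1 ->
  (* w' : a worst partner of u in M1 if u is full, undefined otherwise *)
  (if fullU bU M1 u then exists2 x, w' = Some x & worstU Lu M1 u x
   else w' = None) ->
  (* u' : a worst partner of w in M1 if w is full, undefined otherwise *)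
  (if fullW bW M1 w then exists2 y, u' = Some y & worstW Lw M1 w y
   else u' = None) ->
  let M2 := remove_blocking M1 u w w' u' in
  let B1 := blocking_set Lu Lw bU bW M1 in
  let B2 := blocking_set Lu Lw bU bW M2 in
  B2 :\: B1 != set0 ->
  (isSome u' || isSome w') /\
  (forall p, p \in B2 :\: B1 -> Some p.1 = u' \/ Some p.2 = w').
Proof.
move=> _ M1_bmatching uw_blocking w'_worst u'_worst M2 B1 B2 new_pairs.
rewrite inE /= in uw_blocking.
have new_involves p : p \in B2 :\: B1 -> Some p.1 = u' \/ Some p.2 = w'.
  case: p => a b; rewrite !inE /= => /andP[not_B1 B2ab].
  case: (eqVneq u' (Some a)) => [->|u'a]; first by left.
  case: (eqVneq w' (Some b)) => [->|w'b]; first by right.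
  by move: not_B1; rewrite (blocking_remove_blocking M1_bmatching
    uw_blocking w'_worst u'_worst u'a w'b B2ab).
split=> //.
case/set0Pn: new_pairs => p /new_involves [] <-; by rewrite ?orbT.
Qed.
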